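(* Let $(X,\le,\to,\rightsquigarrow,d,u)$ be a weakly involutive unital quantum B-algebra and let $(\exists,\forall)$ be a pair of strong synchronized maps on $X$ such that $\exists$ is a weak existential quantifier (equivalently, $\forall$ is a weak universal quantifier). Then for all $x,y\in X$, and with each identity holding also when $\to$ is replaced by $\rightsquigarrow$ throughout: (1) $\exists(\forall x\to y)=\forall x\to\exists y$; (2) $\exists(x\to\forall y)=\forall x\to\forall y$; (3) $\exists(\exists x\to y)=\exists x\to\exists y$; (4) $\forall(\exists x\to y)=\exists x\to\forall y$; (5) $\forall(x\to\exists y)=\exists x\to\exists y$; (6) $\forall(\forall x\to y)=\forall x\to\forall y$; (7) $\forall(x\to\forall y)=\exists x\to\forall y$.
   Context: A quantum B-algebra is a partially ordered set $(X,\le)$ with two binary operations $\to$ and $\rightsquigarrow$ such that for all $x,y,z\in X$: $y\to z\le (x\to y)\to(x\to z)$; $y\rightsquigarrow z\le (x\rightsquigarrow y)\to(x\rightsquigarrow z)$; $y\le z$ implies $x\to y\le x\to z$; and $x\le y\to z$ iff $y\le x\rightsquigarrow z$. It is unital if there is $u\in X$ with $u\to x=u\rightsquigarrow x=x$ for all $x$. A pointed quantum B-algebra has a fixed $d\in X$; write $x^{-}=x\to d$, $x^{\sim}=x\rightsquigarrow d$; it is weakly involutive if $(x^{-})^{\sim}=(x^{\sim})^{-}=x$ for all $x$. In a weakly involutive quantum B-algebra define $x\odot y=(x\to y^{-})^{\sim}$ $(=(y\rightsquigarrow x^{\sim})^{-})$ and $x\oplus y=y^{\sim}\to x$ $(=x^{-}\rightsquigarrow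 y)$. A map $\tau:X\to X$ is good if $(\tau(x^{-}))^{\sim}=(\tau(x^{\sim}))^{-}$ for all $x$; good maps $\tau,\sigma$ are synchronized if $\sigma(x)=(\tau(x^{-}))^{\sim}=(\tau(x^{\sim}))^{-}$ for all $x$; they are strong synchronized if moreover $\tau\circ\sigma=\sigma$ (which for synchronized maps is equivalent to $\sigma\circ\tau=\tau$). A good map $\exists$ is a weak existential quantifier if for all $x,y$: $\exists d=d$; $\exists u=u$; $x\le\exists x$; $\exists(x\oplus\exists y)=\exists(\exists x\oplus y)=\exists x\oplus\exists y$; $\exists(x\oplus x)=\exists x\oplus\exists x$; $\exists(x\odot\exists y)=\exists(\exists x\odot y)=\exists x\odot\exists y$. A good map $\forall$ is a weak universal quantifier if for all $x,y$: $\forall u=u$; $\forall d=d$; $\forall x\le x$; $\forall(x\odot\forall y)=\forall(\forall x\odot y)=\forall x\odot\forall y$; $\forall(x\odot x)=\forall x\odot\forall x$; $\forall(x\oplus\forall y)=\forall(\forall x\oplus y)=\forall x\oplus\forall y$. *)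

Set Implicit Arguments.

Section QBA.
Variable X : Type.
Variable le : X -> X -> Prop.
Variables (imp1 imp2 : X -> X -> X).   (* imp1 = ->, imp2 = ~> *)
Variables (d u : X).

Definition is_partial_order : Prop :=
  (forall x, le x x) /\
  (forall x y, le x y -> le y x -> x = y) /\
  (forall x y z, le x y -> le y z -> le x z).

Definition is_quantum_B_algebra : Prop :=
  is_partial_order /\
  (forall x y z, le (imp1 y z) (imp1 (imp1 x y) (imp1 x z))) /\
  (forall x y z, le (imp2 y z) (imp2 (imp2 x y) (imp2 x z))) /\
  (forall x y z, le y z -> le (imp1 x y) (imp1 x z)) /\
  (forall x y z, le x (imp1 y z) <-> le y (imp2 x z)).

Definition is_unit : Prop := forall x, imp1 u x = x /\ imp2 u x = x.

Definition neg1 (x : X) : X := imp1 x d.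
Definition neg2 (x : X) : X := imp2 x d.

Definition weakly_involutive : Prop :=
  forall x, neg2 (neg1 x) = x /\ neg1 (neg2 x) = x.

Definition odot (x y : X) : X := neg2 (imp1 x (neg1 y)).
Definition oplus (x y : X) : X := imp1 (neg2 y) x.

Definition good (t : X -> X) : Prop :=
  forall x, neg2 (t (neg1 x)) = neg1 (t (neg2 x)).

Definition synchronized (t s : X -> X) : Prop :=
  good t /\ good s /\
  forall x, s x = neg2 (t (neg1 x)) /\ s x = neg1 (t (neg2 x)).

Definition strong_synchronized (t s : X -> X) : Prop :=
  synchronized t s /\ forall x, t (s x) = s x.

Definition weak_existential_quantifier (E : X -> X) : Prop :=
  good E /\
  E d = d /\ E u = u /\
  (forall x, le x (E x)) /\
  (forall x y, E (oplus x (E y)) = oplus (E x) (E y) /\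
               E (oplus (E x) y) = oplus (E x) (E y)) /\
  (forall x, E (oplus x x) = oplus (E x) (E x)) /\
  (forall x y, E (odot x (E y)) = odot (E x) (E y) /\
               E (odot (E x) y) = odot (E x) (E y)).

Definition weak_universal_quantifier (A : X -> X) : Prop :=
  good A /\
  A u = u /\ A d = d /\
  (forall x, le (A x) x) /\
  (forall x y, A (odot x (A y)) = odot (A x) (A y) /\
               A (odot (A x) y) = odot (A x) (A y)) /\
  (forall x, A (odot x x) = odot (A x) (A x)) /\
  (forall x y, A (oplus x (A y)) = oplus (A x) (A y) /\
               A (oplus (A x) y) = oplus (A x) (A y)).

Definition prop511_identities (imp : X -> X -> X) (E A : X -> X) : Prop :=
  forall x y,
    E (imp (A x) y) = imp (A x) (E y) /\
    E (imp x (A y)) = imp (A x) (A y) /\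
    E (imp (E x) y) = imp (E x) (E y) /\
    A (imp (E x) y) = imp (E x) (A y) /\
    A (imp x (E y)) = imp (E x) (E y) /\
    A (imp (A x) y) = imp (A x) (A y) /\
    A (imp x (A y)) = imp (E x) (A y).
End QBA.

From Stdlib Require Import Setoid.

(* In a weakly involutive quantum B-algebra, [x ~> y = y^~ -> x^~], so
   [x ⊕ y] rewrites every [a -> b] as a sum and [x ⊙ y] every [(a -> b)^~] as a
   product.  The ⊕/⊙ laws of [∃] then say: [∃ (a -> b)] can be computed by
   applying [∃] to [b] when [a] is [∃]-closed, or by replacing [a] by [∀ a]
   when [b] is [∃]-closed, and dually for [∀].  The closed elements contain
   every [∃ x] and [∀ x] and are stable under both negations; feeding the
   seven shapes of the proposition to these four rules gives the identities
   for [->], and contraposition transports the rules to [~>]. *)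

Section QuantumBAlgebra.

Variable X : Type.
Variable le : X -> X -> Prop.
Variables (imp1 imp2 : X -> X -> X) (d : X).

Hypothesis hQ : is_quantum_B_algebra le imp1 imp2.

Lemma imp1_imp2_swap x y z : imp1 x (imp2 y z) = imp2 y (imp1 x z).
Proof.
  destruct hQ as [[le_refl [le_antisym le_trans]] [imp1_mono [imp2_mono [_ adj]]]].
  apply le_antisym; apply adj.
  - apply le_trans with (imp1 (imp2 y z) z); [apply adj, le_refl | apply imp1_mono].
  - apply le_trans with (imp2 (imp1 x z) z); [apply adj, le_refl | apply imp2_mono].
Qed.

Hypothesis hW : weakly_involutive imp1 imp2 d.

Local Notation n1 := (neg1 imp1 d).
Local Notation n2 := (neg2 imp2 d).

Lemma neg2K x : n2 (n1 x) = x.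
Proof. apply hW. Qed.

Lemma neg1K x : n1 (n2 x) = x.
Proof. apply hW. Qed.

Lemma imp2_contra a b : imp2 a b = imp1 (n2 b) (n2 a).
Proof.
  pose proof (neg2K (n2 a)) as K.
  rewrite <- (neg1K a) at 1; rewrite <- (neg1K b) at 1.
  unfold neg1, neg2 in K |- *; now rewrite <- imp1_imp2_swap, K.
Qed.

Lemma oplus_neg1 a b : oplus imp1 imp2 d b (n1 a) = imp1 a b.
Proof. unfold oplus; now rewrite neg2K. Qed.

Lemma odot_neg2 a b : odot imp1 imp2 d a (n2 b) = n2 (imp1 a b).
Proof. unfold odot; now rewrite neg1K. Qed.

Variables E A : X -> X.

Hypothesis E_d : E d = d.
Hypothesis E_oplusE : forall x y,
  E (oplus imp1 imp2 d x (E y)) = oplus imp1 imp2 d (E x) (E y).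
Hypothesis E_Eoplus : forall x y,
  E (oplus imp1 imp2 d (E x) y) = oplus imp1 imp2 d (E x) (E y).
Hypothesis E_odotE : forall x y,
  E (odot imp1 imp2 d x (E y)) = odot imp1 imp2 d (E x) (E y).
Hypothesis E_Eodot : forall x y,
  E (odot imp1 imp2 d (E x) y) = odot imp1 imp2 d (E x) (E y).
Hypothesis A_sync1 : forall x, A x = n2 (E (n1 x)).
Hypothesis A_sync2 : forall x, A x = n1 (E (n2 x)).
Hypothesis E_A : forall x, E (A x) = A x.

Lemma E_idem x : E (E x) = E x.
Proof.
  pose proof (E_oplusE d x) as H.
  unfold oplus in H; rewrite E_d in H.
  fold (n2 (E x)) (n1 (n2 (E x))) in H.
  now rewrite neg1K in H.
Qed.

Lemma A_neg1 x : A (n1 x) = n1 (E x).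
Proof. now rewrite A_sync2, neg2K. Qed.

Lemma A_neg2 x : A (n2 x) = n2 (E x).
Proof. now rewrite A_sync1, neg1K. Qed.

Lemma neg2_A x : n2 (A x) = E (n2 x).
Proof. now rewrite A_sync2, neg2K. Qed.

Lemma E_fixed_neg1 a : E a = a -> E (n1 a) = n1 a.
Proof. intro Ea. rewrite <- Ea at 1 2; rewrite <- A_neg1. apply E_A. Qed.

Lemma E_fixed_neg2 a : E a = a -> E (n2 a) = n2 a.
Proof. intro Ea. rewrite <- Ea at 1 2; rewrite <- A_neg2. apply E_A. Qed.

Lemma E_imp1_fixed_l a b : E a = a -> E (imp1 a b) = imp1 a (E b).
Proof.
  intro Ea. pose proof (E_oplusE b (n1 a)) as H.
  now rewrite E_fixed_neg1, !oplus_neg1 in H.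
Qed.

Lemma E_imp1_fixed_r a b : E b = b -> E (imp1 a b) = imp1 (A a) b.
Proof.
  intro Eb. pose proof (E_Eoplus b (n1 a)) as H.
  rewrite Eb, oplus_neg1 in H; rewrite H.
  unfold oplus; now rewrite <- A_sync1.
Qed.

Lemma A_imp1_fixed_l a b : E a = a -> A (imp1 a b) = imp1 a (A b).
Proof.
  intro Ea. pose proof (E_Eodot a (n2 b)) as H.
  rewrite Ea, !odot_neg2 in H.
  rewrite A_sync2, H; unfold odot; now rewrite <- A_sync2, neg1K.
Qed.

Lemma A_imp1_fixed_r a b : E b = b -> A (imp1 a b) = imp1 (E a) b.
Proof.
  intro Eb. pose proof (E_odotE a (n2 b)) as H.
  rewrite E_fixed_neg2, !odot_neg2 in H by exact Eb.
  now rewrite A_sync2, H, neg1K.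
Qed.

Lemma E_imp2_fixed_l a b : E a = a -> E (imp2 a b) = imp2 a (E b).
Proof.
  intro Ea. rewrite !imp2_contra, E_imp1_fixed_r by now apply E_fixed_neg2.
  now rewrite A_neg2.
Qed.

Lemma E_imp2_fixed_r a b : E b = b -> E (imp2 a b) = imp2 (A a) b.
Proof.
  intro Eb. rewrite !imp2_contra, E_imp1_fixed_l by now apply E_fixed_neg2.
  now rewrite neg2_A.
Qed.

Lemma A_imp2_fixed_l a b : E a = a -> A (imp2 a b) = imp2 a (A b).
Proof.
  intro Ea. rewrite !imp2_contra, A_imp1_fixed_r by now apply E_fixed_neg2.
  now rewrite neg2_A.
Qed.

Lemma A_imp2_fixed_r a b : E b = b -> A (imp2 a b) = imp2 (E a) b.
Proof.
  intro Eb. rewrite !imp2_contra, A_imp1_fixed_l by now apply E_fixed_neg2.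
  now rewrite A_neg2.
Qed.

Lemma prop511_identities_of_fixed (imp : X -> X -> X)
  (E_imp_l : forall a b, E a = a -> E (imp a b) = imp a (E b))
  (E_imp_r : forall a b, E b = b -> E (imp a b) = imp (A a) b)
  (A_imp_l : forall a b, E a = a -> A (imp a b) = imp a (A b))
  (A_imp_r : forall a b, E b = b -> A (imp a b) = imp (E a) b) :
  prop511_identities imp E A.
Proof.
  intros x y; repeat split;
    first [ apply E_imp_l | apply E_imp_r | apply A_imp_l | apply A_imp_r ];
    first [ apply E_A | apply E_idem ].
Qed.

End QuantumBAlgebra.

Theorem proposition5p11 (X : Type) (le : X -> X -> Prop) (imp1 imp2 : X -> X -> X)
  (d u : X) (E A : X -> X)
  (hQ : is_quantum_B_algebra le imp1 imp2)
  (hU : is_unit imp1 imp2 u)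
  (hW : weakly_involutive imp1 imp2 d)
  (hS : strong_synchronized imp1 imp2 d E A)
  (hE : weak_existential_quantifier le imp1 imp2 d u E) :
  prop511_identities imp1 E A /\ prop511_identities imp2 E A.
Proof.
  destruct hS as [[_ [_ A_sync]] E_A].
  destruct hE as [_ [E_d [_ [_ [E_oplus [_ E_odot]]]]]].
  assert (A_sync1 : forall x, A x = neg2 imp2 d (E (neg1 imp1 d x))) by apply A_sync.
  assert (A_sync2 : forall x, A x = neg1 imp1 d (E (neg2 imp2 d x))) by apply A_sync.
  assert (E_oplusE : forall x y, E (oplus imp1 imp2 d x (E y))
                                 = oplus imp1 imp2 d (E x) (E y)) by apply E_oplus.
  assert (E_Eoplus : forall x y, E (oplus imp1 imp2 d (E x) y)
                                 = oplus imp1 imp2 d (E x) (E y)) by apply E_oplus.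
  assert (E_odotE : forall x y, E (odot imp1 imp2 d x (E y))
                                = odot imp1 imp2 d (E x) (E y)) by apply E_odot.
  assert (E_Eodot : forall x y, E (odot imp1 imp2 d (E x) y)
                                = odot imp1 imp2 d (E x) (E y)) by apply E_odot.
  split; apply prop511_identities_of_fixed with imp1 imp2 d;
    eauto using E_imp1_fixed_l, E_imp1_fixed_r, A_imp1_fixed_l, A_imp1_fixed_r,
      E_imp2_fixed_l, E_imp2_fixed_r, A_imp2_fixed_l, A_imp2_fixed_r.
Qed.
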